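(* Let $m\ge 2$ and $n\ge 2$ be integers. The number $D_F(m,n)$ of maximal antichains of $[m]^n$ is at least the number $D_E(m,n-1)$ of antichains (the empty set included) of $[m]^{n-1}$: $D_F(m,n)\ge D_E(m,n-1)$.
   Context: $[m]=\{1,\dots,m\}$ with its natural order; $[m]^k$ carries the componentwise (product) order. An antichain is a set of pairwise incomparable elements; it is maximal if no further element of the poset can be added while remaining an antichain. *)

From mathcomp Require Import all_boot.
Set Implicit Arguments. Unset Strict Implicit. Unset Printing Implicit Defensive.

(* Points of [m]^k: functions 'I_k -> 'I_m (coordinate values 0..m-1 encode 1..m;
   the order is the same). *)
Definition cube (m k : nat) := {ffun 'I_k -> 'I_m}.

Definition cle (m k : nat) (x y : cube m k) : bool := [forall i, x i <= y i].

Definition comparable (m k : nat) (x y : cube m k) : bool := cle x y || cle y x.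

Definition antichain (m k : nat) (A : {set cube m k}) : bool :=
  [forall x in A, forall y in A, (x != y) ==> ~~ comparable x y].

Definition max_antichain (m k : nat) (A : {set cube m k}) : bool :=
  antichain A && [forall z, (z \notin A) ==> ~~ antichain (z |: A)].

Definition DE (m k : nat) : nat := #|[set A : {set cube m k} | antichain A]|.

Definition DF (m k : nat) : nat := #|[set A : {set cube m k} | max_antichain A]|.

From Pilot Require Import Defs.
From mathcomp Require Import all_boot.

Set Implicit Arguments. Unset Strict Implicit. Unset Printing Implicit Defensive.

(* For an antichain A of [m]^(n-1), put A on the top layer {m} x [m]^(n-1) and
   the minimal elements of the complement of the down-set of A on the bottom
   layer {1} x [m]^(n-1).  The result is a maximal antichain of [m]^n: a point
   whose tail lies below some a in A is below (m, a), and otherwise its tail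
   lies above a minimal element u of that complement, so it is above (1, u).
   The top layer gives back A, so the map is injective. *)

Section ProductOrder.

Variables m k : nat.
Implicit Types (x y z : cube m k) (A S : {set cube m k}).

Lemma cle_refl x : cle x x.
Proof. exact/forallP. Qed.

Lemma cle_trans y x z : cle x y -> cle y z -> cle x z.
Proof.
move=> /forallP le_xy /forallP le_yz; apply/forallP => i.
exact: leq_trans (le_xy i) (le_yz i).
Qed.

Definition weight x : nat := \sum_i (x i : nat).

Lemma cle_weight_lt x y : cle x y -> x != y -> weight x < weight y.
Proof.
move=> /forallP le_xy neq_xy.
have [i neq_i] : exists i, x i != y i.
  apply/existsP; apply: contraR neq_xy => /existsPn eq_xy.
  by apply/eqP/ffunP => i; apply/eqP; rewrite -[_ == _]negbK eq_xy.
rewrite /weight (bigD1 i) // [X in _ < X](bigD1 i) //= -addSn.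
by apply: leq_add; [rewrite ltn_neqAle neq_i le_xy | apply: leq_sum].
Qed.

Lemma antichain_cleP A :
  reflect {in A &, forall x y, cle x y -> x = y} (antichain A).
Proof.
apply: (iffP forall_inP) => [anti x y xA yA le_xy | cle_eq x xA].
  apply/eqP; apply: contraTT le_xy => neq_xy.
  by move: (anti x xA) => /forall_inP/(_ y yA)/implyP/(_ neq_xy); case/norP.
apply/forall_inP => y yA; apply/implyP => neq_xy.
apply/norP; split; apply/negP.
  by move=> /(cle_eq _ _ xA yA) eq_xy; rewrite eq_xy eqxx in neq_xy.
by move=> /(cle_eq _ _ yA xA) eq_yx; rewrite eq_yx eqxx in neq_xy.
Qed.

Lemma max_antichain_intro A :
  antichain A -> (forall z, exists2 w, w \in A & Defs.comparable z w) ->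
  max_antichain A.
Proof.
move=> antiA comparable_to_A; rewrite /max_antichain antiA /=.
apply/forallP => z; apply/implyP => zNA; apply/negP => /forall_inP anti_zA.
have [w wA cmp_zw] := comparable_to_A z.
have neq_zw : z != w by apply: contraNneq zNA => ->.
have := anti_zA z (setU11 z A) => /forall_inP/(_ w).
by rewrite in_setU1 wA orbT neq_zw cmp_zw => /(_ isT).
Qed.

Definition downset A := [set x | [exists a in A, cle x a]].

Definition minimals S := [set u in S | [forall v in S, cle v u ==> (v == u)]].

Lemma minimals_sub S : {subset minimals S <= S}.
Proof. by move=> u; rewrite inE => /andP[]. Qed.

Lemma minimals_min S u v : u \in minimals S -> v \in S -> cle v u -> v = u.
Proof. by rewrite inE => /andP[_ /forall_inP min_u] /min_u/implyP le /le/eqP. Qed.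

Lemma minimal_below S x : x \in S -> exists2 u, u \in minimals S & cle u x.
Proof.
move=> xS.
have x_below : x \in [set v in S | cle v x] by rewrite inE xS cle_refl.
have [u /setIdP[uS le_ux] u_min] := arg_minnP weight x_below.
exists u => //; rewrite inE uS; apply/forall_inP => v vS; apply/implyP => le_vu.
have v_below : v \in [set v in S | cle v x] by rewrite inE vS (cle_trans le_vu).
apply: contraTT (u_min v v_below) => neq_vu.
by rewrite -ltnNge cle_weight_lt.
Qed.

End ProductOrder.

Section Layers.

Variables p k : nat.
(* m >= 2 keeps the top layer {m} x [m]^k and the bottom layer {1} x [m]^k disjoint. *)
Local Notation m := p.+2.
Implicit Types (a b u : cube m k) (y : cube m k.+1) (A : {set cube m k}).

Definition pcons (j : 'I_m) a : cube m k.+1 :=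
  [ffun i => if unlift ord0 i is Some i' then a i' else j].

Definition ptail y : cube m k := [ffun i => y (lift ord0 i)].

Lemma pcons_head j a : pcons j a ord0 = j.
Proof. by rewrite ffunE unlift_none. Qed.

Lemma ptail_pcons j a : ptail (pcons j a) = a.
Proof. by apply/ffunP => i; rewrite !ffunE liftK. Qed.

Lemma ptailK y : pcons (y ord0) (ptail y) = y.
Proof.
by apply/ffunP => i; rewrite !ffunE; case: unliftP => [j|] -> //; rewrite ffunE.
Qed.

Lemma pcons_inj i j a b : pcons i a = pcons j b -> i = j /\ a = b.
Proof.
move=> eq_ij; split; first by rewrite -(pcons_head i a) eq_ij pcons_head.
by rewrite -(ptail_pcons i a) eq_ij ptail_pcons.
Qed.

Lemma cle_pcons i j a b : cle (pcons i a) (pcons j b) = (i <= j) && cle a b.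
Proof.
apply/forallP/andP => [le_ij | [le_ij /forallP le_ab] l].
  split; first by have := le_ij ord0; rewrite !pcons_head.
  by apply/forallP => l; have := le_ij (lift ord0 l); rewrite !ffunE liftK.
by rewrite !ffunE; case: unlift.
Qed.

Definition layered A : {set cube m k.+1} :=
  [set pcons ord_max a | a in A] :|: [set pcons ord0 u | u in minimals (~: downset A)].

Lemma pcons_max_layered a A : (pcons ord_max a \in layered A) = (a \in A).
Proof.
apply/setUP/idP => [[/imsetP[b bA /pcons_inj[_ ->]] // | /imsetP[u _ /pcons_inj[]]] //|].
by left; apply: imset_f.
Qed.

Lemma layered_antichain A : antichain A -> antichain (layered A).
Proof.
move/antichain_cleP => antiA; apply/antichain_cleP.
move=> _ _ /setUP[|] /imsetP[a aS ->] /setUP[|] /imsetP[b bS ->];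
  rewrite cle_pcons => /andP[le_ij le_ab] //.
- by rewrite (antiA a b).
- have a_down : a \in downset A by rewrite inE; apply/exists_inP; exists b.
  by move/minimals_sub: aS; rewrite inE a_down.
- by rewrite (minimals_min bS (minimals_sub aS) le_ab).
Qed.

Lemma layered_max_antichain A : antichain A -> max_antichain (layered A).
Proof.
move=> antiA; apply: max_antichain_intro; first exact: layered_antichain.
move=> z; rewrite /Defs.comparable -(ptailK z); move: (z ord0) (ptail z) => j a.
case: (boolP (a \in downset A)) => [|a_up].
  rewrite inE => /exists_inP[b bA le_ab]; exists (pcons ord_max b).
    by rewrite pcons_max_layered.
  by rewrite cle_pcons le_ab -ltnS ltn_ord.
rewrite -in_setC in a_up; have [u u_min le_ua] := minimal_below a_up.
exists (pcons ord0 u); first by apply/setUP; right; apply: imset_f.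
by rewrite !cle_pcons le_ua orbT.
Qed.

Lemma layered_inj : injective layered.
Proof.
move=> A1 A2 eq_layered; apply/setP => a.
by rewrite -!pcons_max_layered eq_layered.
Qed.

End Layers.

Theorem proposition5 (m n : nat) (hm : 2 <= m) (hn : 2 <= n) :
  DE m n.-1 <= DF m n.
Proof.
case: m hm => [|[|p]] // _; case: n hn => [|k] // _ /=.
rewrite /DE /DF -(card_imset _ (@layered_inj p k)).
apply/subset_leq_card/subsetP => _ /imsetP[A antiA ->].
by move: antiA; rewrite !inE; apply: layered_max_antichain.
Qed.
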